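(* Let $f\geq 1$ be an integer, let $\zeta\in\mathbf{C}$ with $\zeta^f=1$, and let $x\in\mathbf{C}$ with $|x|\geq 1-\frac{1}{2f}$. Set $x'=x-\frac{x^f-1}{fx^{f-1}}$. Then $|x'-\zeta|\leq f|x-\zeta|^2$. *)

From HB Require Import structures.
From mathcomp Require Import all_boot all_order all_algebra.
From mathcomp Require Import complex.
From mathcomp Require Import reals.

From HB Require Import structures.
From mathcomp Require Import all_boot all_order all_algebra.
From mathcomp Require Import complex.
From mathcomp Require Import reals.
From mathcomp Require Import ring lra zify.

Set Implicit Arguments.
Unset Strict Implicit.
Unset Printing Implicit Defensive.

Import Order.TTheory GRing.Theory Num.Theory ComplexField.
Local Open Scope ring_scope.

(* Write d = x - zeta.  Since zeta^f = 1, x^f - 1 = d * sum_i x^(f-1-i) zeta^i,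
   so x' - zeta = d * g / (f x^(f-1)) with g = sum_(i<f) x^(f-1-i) (x^i - zeta^i).
   Each x^i - zeta^i is again a multiple of d, which bounds |g| by
   |d| * C(f,2) * max_(m<f) |x|^m.  By Bernoulli's inequality the hypothesis on
   |x| gives |x|^m <= 2 |x|^(f-1) for m < f, and since 2 C(f,2) = f (f-1) this
   yields |x' - zeta| <= (f-1) |d|^2. *)

Lemma bernoulli_ineq (R : realFieldType) (t : R) n :
  t <= 1 -> 1 - n%:R * t <= (1 - t) ^+ n.
Proof.
move=> t_le1; elim: n => [|n IHn]; first by rewrite mul0r subr0.
have t2_ge0 : 0 <= n%:R * t ^+ 2 by rewrite mulr_ge0 ?sqr_ge0.
have one_sub_t_ge0 : 0 <= 1 - t by rewrite subr_ge0.
have := ler_wpM2l one_sub_t_ge0 IHn.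
rewrite exprS -natr1; nra.
Qed.

Section PowersNearUnitCircle.
Variables (R : realFieldType) (f : nat).
Hypothesis f_gt0 : (0 < f)%N.

Let f_ge1 : 1 <= f%:R :> R. Proof. by rewrite ler1n. Qed.

Lemma half_le_1_sub_inv2f : 2^-1 <= 1 - (2 * f%:R)^-1 :> R.
Proof.
suff : (2 * f%:R)^-1 <= 2^-1 :> R by lra.
by rewrite lef_pV2 ?posrE; have := f_ge1; lra.
Qed.

Lemma half_le_1_sub_inv2f_exprn : 2^-1 <= (1 - (2 * f%:R)^-1) ^+ f.-1 :> R.
Proof.
have inv_le1 : (2 * f%:R)^-1 <= 1 :> R by have := half_le_1_sub_inv2f; lra.
apply: le_trans (bernoulli_ineq f.-1 inv_le1).
have -> : (f.-1)%:R = f%:R - 1 :> R by rewrite -{2}(prednK f_gt0) -natr1 addrK.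
have inv_ge0 : 0 <= (2 * f%:R)^-1 :> R by rewrite invr_ge0 mulr_ge0.
suff -> : (f%:R - 1) * (2 * f%:R)^-1 = 2^-1 - (2 * f%:R)^-1 :> R by lra.
by field; have := f_ge1; lra.
Qed.

Lemma exprn_le_2_exprn_pred (s : R) m :
  1 - (2 * f%:R)^-1 <= s -> (m < f)%N -> s ^+ m <= 2 * s ^+ f.-1.
Proof.
move=> s_ge m_lt_f; have half_le := half_le_1_sub_inv2f.
have s_ge0 : 0 <= s by lra.
have m_le : (m <= f.-1)%N by lia.
have pred_ge0 := exprn_ge0 f.-1 s_ge0.
have [s_ge1 | s_lt1] := lerP 1 s.
  by have := ler_weXn2l s_ge1 m_le; lra.
have sm_le1 : s ^+ m <= 1 by apply: exprn_ile1; lra.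
suff : 2^-1 <= s ^+ f.-1 by lra.
apply: le_trans half_le_1_sub_inv2f_exprn _.
by apply: lerXn2r; rewrite ?nnegrE; lra.
Qed.

End PowersNearUnitCircle.

Lemma newton_step_subr (F : fieldType) f (zeta x : F) :
  f%:R != 0 :> F -> x != 0 -> zeta ^+ f = 1 ->
  x - (x ^+ f - 1) / (f%:R * x ^+ f.-1) - zeta
  = (x - zeta) * (\sum_(i < f) x ^+ (f.-1 - i) * (x ^+ i - zeta ^+ i))
      / (f%:R * x ^+ f.-1).
Proof.
move=> f_neq0 x_neq0 zeta_f.
have -> : \sum_(i < f) x ^+ (f.-1 - i) * (x ^+ i - zeta ^+ i)
    = f%:R * x ^+ f.-1 - \sum_(i < f) x ^+ (f.-1 - i) * zeta ^+ i.
  rewrite mulr_natl -[X in _ *+ X](card_ord f) -sumr_const -sumrB.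
  apply: eq_bigr => i _.
  by rewrite mulrBr -exprD subnK // -ltnS (ltn_predK (ltn_ord i)).
rewrite -{1}zeta_f subrXX; field.
by rewrite f_neq0 expf_neq0.
Qed.

Lemma norm_subrX_le (F : numDomainType) (x y : F) n : `|y| <= 1 ->
  `|x ^+ n - y ^+ n| <= `|x - y| * \sum_(j < n) `|x| ^+ (n.-1 - j).
Proof.
move=> y_le1; rewrite subrXX normrM ler_wpM2l //.
apply: le_trans (ler_norm_sum _ _ _) _; apply: ler_sum => j _.
by rewrite normrM !normrX ler_piMr ?exprn_ge0 ?exprn_ile1.
Qed.

Lemma norm_newton_defect_le (F : numDomainType) (x y : F) n c :
  `|y| <= 1 -> (forall m, (m < n)%N -> `|x| ^+ m <= c) ->
  `|\sum_(i < n) x ^+ (n.-1 - i) * (x ^+ i - y ^+ i)|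
    <= `|x - y| * c * 'C(n, 2)%:R.
Proof.
move=> y_le1 pow_le; rewrite -bin2_sum big_mkord natr_sum mulr_sumr.
apply: le_trans (ler_norm_sum _ _ _) _; apply: ler_sum => i _.
rewrite normrM normrX.
apply: le_trans (ler_wpM2l (exprn_ge0 _ (normr_ge0 x)) (norm_subrX_le _ i y_le1)) _.
rewrite mulrCA -mulrA ler_wpM2l // mulr_sumr mulr_natr.
rewrite -[X in _ *+ X](card_ord i) -sumr_const.
apply: ler_sum => j _; rewrite -exprD; apply: pow_le.
have := ltn_ord i; have := ltn_ord j; lia.
Qed.

Lemma norm_newton_step_subr_le (F : numFieldType) f (zeta x : F) :
  (0 < f)%N -> zeta ^+ f = 1 -> x != 0 ->
  (forall m, (m < f)%N -> `|x| ^+ m <= 2 * `|x| ^+ f.-1) ->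
  `|x - (x ^+ f - 1) / (f%:R * x ^+ f.-1) - zeta|
    <= f.-1%:R * `|x - zeta| ^+ 2.
Proof.
move=> f_gt0 zeta_f x_neq0 pow_le.
have f_neq0 : f%:R != 0 :> F by rewrite pnatr_eq0 -lt0n.
have zeta_le1 : `|zeta| <= 1.
  by rewrite le_eqVlt -(pexpr_eq1 f_gt0) ?normr_ge0 // -normrX zeta_f normr1 eqxx.
have denom_gt0 : 0 < `|f%:R * x ^+ f.-1| by rewrite normr_gt0 mulf_neq0 ?expf_neq0.
rewrite newton_step_subr // normf_div ler_pdivrMr // normrM.
apply: le_trans (ler_wpM2l (normr_ge0 _) (norm_newton_defect_le zeta_le1 pow_le)) _.
have bin2_double : 'C(f, 2)%:R * 2 = f%:R * f.-1%:R :> F.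
  by rewrite -natrM -natrM -[f.-1]bin1 mul_bin_diag mulnC.
rewrite normrM normr_nat normrX.
set d := `|x - zeta|; set p := `|x| ^+ f.-1.
suff -> : d * (d * (2 * p) * 'C(f, 2)%:R) = f.-1%:R * d ^+ 2 * (f%:R * p) by [].
transitivity (d ^+ 2 * p * ('C(f, 2)%:R * 2)); first by ring.
by rewrite bin2_double; ring.
Qed.

Local Open Scope complex_scope.

Theorem lemma11 (R : realType) (f : nat) (zeta x : R[i]) :
  (1 <= f)%N ->
  zeta ^+ f = 1 ->
  ((1 - (2 * f%:R)^-1)%:C <= `|x|) ->
  `|(x - (x ^+ f - 1) / (f%:R * x ^+ f.-1)) - zeta| <= f%:R * `|x - zeta| ^+ 2.
Proof.
move=> f_gt0 zeta_f x_ge.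
have [s norm_x] : exists s : R, `|x| = s%:C by rewrite normc_def; eexists.
rewrite norm_x lecR in x_ge.
have x_neq0 : x != 0.
  by rewrite -normr_gt0 norm_x ltcR; have := half_le_1_sub_inv2f R f_gt0; lra.
have pow_le m : (m < f)%N -> `|x| ^+ m <= 2 * `|x| ^+ f.-1.
  move=> m_lt_f; rewrite norm_x -!rmorphXn -(rmorph_nat (real_complex R) 2).
  by rewrite -rmorphM lecR exprn_le_2_exprn_pred.
apply: le_trans (norm_newton_step_subr_le f_gt0 zeta_f x_neq0 pow_le) _.
by rewrite ler_wpM2r ?exprn_ge0 // ler_nat leq_pred.
Qed.
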